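(* Let $S$ be a functional PTS specification. For all terms $M,N,A,B$ of the $\lambda\Pi/S$ syntax such that the relevant inverse translations are defined: (1) if $M\longrightarrow_{\beta R}N$ then $\varphi(M)\longrightarrow_\beta^*\varphi(N)$; (2) if $A\longrightarrow_{\beta R}B$ then $\psi(A)\longrightarrow_\beta^*\psi(B)$.
   Context: $S=(\mathcal S,\mathcal A,\mathcal R)$ is a PTS specification (sorts, axioms $(s_1:s_2)$, rules $(s_1,s_2,s_3)$). Terms are $s\mid x\mid M\,N\mid\lambda x:A.M\mid\Pi x:A.B$ over constants $u_s,\varepsilon_s$ ($s\in\mathcal S$), $\dot s_1$ ($(s_1:s_2)\in\mathcal A$), $\dot\pi_{s_1s_2s_3}$ ($(s_1,s_2,s_3)\in\mathcal R$). $\longrightarrow_{\beta R}$ is the union of $\beta$-reduction and the contextual closure of the rewrite rules $\varepsilon_{s_2}\,\dot s_1\longrightarrow u_{s_1}$ for $(s_1:s_2)\in\mathcal A$ and $\varepsilon_{s_3}(\dot\pi_{s_1s_2s_3}\,A\,B)\longrightarrow\Pi x:\varepsilon_{s_1}A.\,\varepsilon_{s_2}(B\,x)$ for $(s_1,s_2,s_3)\in\mathcal R$ (for arbitrary terms $A,B$). Inverse translations (partial): $\varphi(\dot s)=s$, $\varphi(\dot\pi_{s_1s_2s_3})=\lambda\alpha:s_1.\lambda\beta:(\alpha\to s_2).\Pi x:\alpha.\beta\,x$, $\varphi(x)=x$, $\varphi(M\,N)=\varphi(M)\varphi(N)$, $\varphi(\lambda x:A.M)=\lambda x:\psi(A).\varphi(M)$;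 $\psi(u_s)=s$, $\psi(\varepsilon_sM)=\varphi(M)$, $\psi(\Pi x:A.B)=\Pi x:\psi(A).\psi(B)$. *)

From Stdlib Require Import Arith Relations.
Set Implicit Arguments.

Record pts_spec := {
  sort : Type;
  axiom : sort -> sort -> Prop;          (* (s1 : s2) in A *)
  rule : sort -> sort -> sort -> Prop
}.

Definition functional_spec (P : pts_spec) : Prop :=
  (forall s1 s2 s2', axiom P s1 s2 -> axiom P s1 s2' -> s2 = s2') /\
  (forall s1 s2 s3 s3', rule P s1 s2 s3 -> rule P s1 s2 s3' -> s3 = s3').

Inductive pterm (S : Type) : Type :=
| PSort : S -> pterm S
| PVar : nat -> pterm S
| PApp : pterm S -> pterm S -> pterm S
| PLam : pterm S -> pterm S -> pterm S
| PPi : pterm S -> pterm S -> pterm S.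
Arguments PVar {S} _.

Fixpoint plift S (d k : nat) (M : pterm S) : pterm S :=
  match M with
  | PSort s => PSort s
  | PVar n => if n <? k then PVar n else PVar (n + d)
  | PApp M N => PApp (plift d k M) (plift d k N)
  | PLam A M => PLam (plift d k A) (plift d (Datatypes.S k) M)
  | PPi A B => PPi (plift d k A) (plift d (Datatypes.S k) B)
  end.

Fixpoint psubst S (k : nat) (N M : pterm S) : pterm S :=
  match M with
  | PSort s => PSort s
  | PVar n => match Nat.compare n k with
              | Lt => PVar n
              | Eq => plift k 0 N
              | Gt => PVar (pred n)
              end
  | PApp M1 M2 => PApp (psubst k N M1) (psubst k N M2)
  | PLam A M1 => PLam (psubst k N A) (psubst (Datatypes.S k) N M1)
  | PPi A B => PPi (psubst k N A) (psubst (Datatypes.S k) N B)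
  end.

Inductive pbeta S : pterm S -> pterm S -> Prop :=
| pbeta_redex : forall A M N, pbeta (PApp (PLam A M) N) (psubst 0 N M)
| pbeta_appl : forall M M' N, pbeta M M' -> pbeta (PApp M N) (PApp M' N)
| pbeta_appr : forall M N N', pbeta N N' -> pbeta (PApp M N) (PApp M N')
| pbeta_laml : forall A A' M, pbeta A A' -> pbeta (PLam A M) (PLam A' M)
| pbeta_lamr : forall A M M', pbeta M M' -> pbeta (PLam A M) (PLam A M')
| pbeta_pil : forall A A' B, pbeta A A' -> pbeta (PPi A B) (PPi A' B)
| pbeta_pir : forall A B B', pbeta B B' -> pbeta (PPi A B) (PPi A B').

Definition pbeta_star S := clos_refl_trans (pterm S) (@pbeta S).

Inductive lpsort := LType | LKind.

Inductive lpterm (S : Type) : Type :=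
| LSort : lpsort -> lpterm S
| LVar : nat -> lpterm S
| LApp : lpterm S -> lpterm S -> lpterm S
| LLam : lpterm S -> lpterm S -> lpterm S
| LPi : lpterm S -> lpterm S -> lpterm S
| Cu : S -> lpterm S
| Ceps : S -> lpterm S
| Cdot : S -> lpterm S
| Cpi : S -> S -> S -> lpterm S.
Arguments LSort {S} _.
Arguments LVar {S} _.

(** only the constants of the signature of lambda-Pi/S occur in M *)
Fixpoint wf_lp (P : pts_spec) (M : lpterm (sort P)) : Prop :=
  match M with
  | LSort _ | LVar _ | Cu _ | Ceps _ => True
  | LApp M N | LLam M N | LPi M N => wf_lp P M /\ wf_lp P N
  | Cdot s1 => exists s2, axiom P s1 s2
  | Cpi s1 s2 s3 => rule P s1 s2 s3
  end.

Fixpoint llift S (d k : nat) (M : lpterm S) : lpterm S :=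
  match M with
  | LVar n => if n <? k then LVar n else LVar (n + d)
  | LApp M N => LApp (llift d k M) (llift d k N)
  | LLam A M => LLam (llift d k A) (llift d (Datatypes.S k) M)
  | LPi A B => LPi (llift d k A) (llift d (Datatypes.S k) B)
  | c => c
  end.

Fixpoint lsubst S (k : nat) (N M : lpterm S) : lpterm S :=
  match M with
  | LVar n => match Nat.compare n k with
              | Lt => LVar n
              | Eq => llift k 0 N
              | Gt => LVar (pred n)
              end
  | LApp M1 M2 => LApp (lsubst k N M1) (lsubst k N M2)
  | LLam A M1 => LLam (lsubst k N A) (lsubst (Datatypes.S k) N M1)
  | LPi A B => LPi (lsubst k N A) (lsubst (Datatypes.S k) N B)
  | c => c
  end.

Inductive red_betaR (P : pts_spec) : lpterm (sort P) -> lpterm (sort P) -> Prop :=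
| rb_beta : forall A M N, red_betaR P (LApp (LLam A M) N) (lsubst 0 N M)
| rb_ax : forall s1 s2, axiom P s1 s2 ->
    red_betaR P (LApp (Ceps s2) (Cdot s1)) (Cu s1)
| rb_rule : forall s1 s2 s3 A B, rule P s1 s2 s3 ->
    red_betaR P (LApp (Ceps s3) (LApp (LApp (Cpi s1 s2 s3) A) B))
      (LPi (LApp (Ceps s1) A)
           (LApp (Ceps s2) (LApp (llift 1 0 B) (LVar 0))))
| rb_appl : forall M M' N, red_betaR P M M' -> red_betaR P (LApp M N) (LApp M' N)
| rb_appr : forall M N N', red_betaR P N N' -> red_betaR P (LApp M N) (LApp M N')
| rb_laml : forall A A' M, red_betaR P A A' -> red_betaR P (LLam A M) (LLam A' M)
| rb_lamr : forall A M M', red_betaR P M M' -> red_betaR P (LLam A M) (LLam A M')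
| rb_pil : forall A A' B, red_betaR P A A' -> red_betaR P (LPi A B) (LPi A' B)
| rb_pir : forall A B B', red_betaR P B B' -> red_betaR P (LPi A B) (LPi A B').

Fixpoint phi S (M : lpterm S) : option (pterm S) :=
  match M with
  | Cdot s => Some (PSort s)
  | Cpi s1 s2 s3 =>
      (* \alpha:s1. \beta:(alpha -> s2). Pi x:alpha. beta x *)
      Some (PLam (PSort s1)
             (PLam (PPi (PVar 0) (PSort s2))
                   (PPi (PVar 1) (PApp (PVar 1) (PVar 0)))))
  | LVar n => Some (PVar n)
  | LApp M N =>
      match phi M, phi N with
      | Some M', Some N' => Some (PApp M' N')
      | _, _ => None
      end
  | LLam A M =>
      match psi A, phi M with
      | Some A', Some M' => Some (PLam A' M')
      | _, _ => None
      end
  | _ => None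
  end
with psi S (A : lpterm S) : option (pterm S) :=
  match A with
  | Cu s => Some (PSort s)
  | LApp (Ceps _) M => phi M
  | LPi A B =>
      match psi A, psi B with
      | Some A', Some B' => Some (PPi A' B')
      | _, _ => None
      end
  | _ => None
  end.

(* The inverse translations commute with lifting and substitution, so a beta step
   maps to a beta step.  The rule for an axiom maps to equality, since both sides
   translate to the sort [s1].  The rule for [dot pi_{s1 s2 s3} A B] is simulated
   by two beta steps: [phi(dot pi)] is a lambda-abstraction over [alpha] and [beta]
   whose body, applied to [A] and [B], is exactly [Pi x:A. B x]. *)

From Stdlib Require Import Relations Arith Lia.

Ltac invert_some :=
  repeat match goal with
  | H : match ?e with _ => _ end = Some _ |- _ =>
      let E := fresh "E" in destruct e eqn:E; try discriminate H
  | H : Some _ = Some _ |- _ => injection H; clear H; intros; subst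
  end.

Section InverseTranslation.

Variable S : Type.

Lemma phi_psi_llift (M : lpterm S) :
  (forall M' d k, phi M = Some M' -> phi (llift d k M) = Some (plift d k M')) /\
  (forall A' d k, psi M = Some A' -> psi (llift d k M) = Some (plift d k A')).
Proof.
  induction M as [| n | M1 [IH1 IH1'] M2 [IH2 IH2'] | M1 [IH1 IH1'] M2 [IH2 IH2']
                  | M1 [IH1 IH1'] M2 [IH2 IH2'] | | | |];
    split; intros X d k H; simpl in H |- *; try discriminate; invert_some; simpl.
  - destruct (n <? k); reflexivity.
  - now erewrite IH1, IH2 by eauto.
  - destruct M1; try discriminate; auto.
  - now erewrite IH1', IH2 by eauto.
  - now erewrite IH1', IH2' by eauto.
  - reflexivity.
  - reflexivity.
  - reflexivity.
Qed.

Lemma phi_llift (M : lpterm S) (M' : pterm S) d k :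
  phi M = Some M' -> phi (llift d k M) = Some (plift d k M').
Proof. apply phi_psi_llift. Qed.

Lemma phi_psi_lsubst (N : lpterm S) (N' : pterm S) :
  phi N = Some N' -> forall M : lpterm S,
  (forall M' k, phi M = Some M' -> phi (lsubst k N M) = Some (psubst k N' M')) /\
  (forall A' k, psi M = Some A' -> psi (lsubst k N M) = Some (psubst k N' A')).
Proof.
  intros HN M.
  induction M as [| n | M1 [IH1 IH1'] M2 [IH2 IH2'] | M1 [IH1 IH1'] M2 [IH2 IH2']
                  | M1 [IH1 IH1'] M2 [IH2 IH2'] | | | |];
    split; intros X k H; simpl in H |- *; try discriminate; invert_some; simpl.
  - destruct (Nat.compare n k); auto using phi_llift.
  - now erewrite IH1, IH2 by eauto.
  - destruct M1; try discriminate; auto.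
  - now erewrite IH1', IH2 by eauto.
  - now erewrite IH1', IH2' by eauto.
  - reflexivity.
  - reflexivity.
  - reflexivity.
Qed.

Lemma phi_lsubst (M N : lpterm S) (M' N' : pterm S) k :
  phi M = Some M' -> phi N = Some N' -> phi (lsubst k N M) = Some (psubst k N' M').
Proof. intros HM HN; exact (proj1 (phi_psi_lsubst _ _ HN M) _ _ HM). Qed.

Lemma plift_0 (M : pterm S) k : plift 0 k M = M.
Proof.
  revert k; induction M; intros k; simpl; f_equal; auto.
  destruct (n <? k); f_equal; lia.
Qed.

Lemma psubst_plift_1 (M N : pterm S) k : psubst k N (plift 1 k M) = M.
Proof.
  revert k; induction M; intros k; simpl; f_equal; auto.
  destruct (Nat.ltb_spec n k); simpl.
  - destruct (Nat.compare_spec n k); auto; lia.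
  - destruct (Nat.compare_spec (n + 1) k); [lia | lia | f_equal; lia].
Qed.

Lemma pbeta_star_map (f : pterm S -> pterm S) :
  (forall x y, pbeta x y -> pbeta (f x) (f y)) ->
  forall x y, pbeta_star x y -> pbeta_star (f x) (f y).
Proof.
  intros Hf x y H; induction H.
  - apply rt_step; auto.
  - apply rt_refl.
  - eapply rt_trans; eauto.
Qed.

Lemma pbeta_star_appl (M M' N : pterm S) :
  pbeta_star M M' -> pbeta_star (PApp M N) (PApp M' N).
Proof. apply (pbeta_star_map (fun x => PApp x N)); constructor; auto. Qed.

Lemma pbeta_star_appr (M N N' : pterm S) :
  pbeta_star N N' -> pbeta_star (PApp M N) (PApp M N').
Proof. apply (pbeta_star_map (PApp M)); constructor; auto. Qed.

Lemma pbeta_star_laml (A A' M : pterm S) :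
  pbeta_star A A' -> pbeta_star (PLam A M) (PLam A' M).
Proof. apply (pbeta_star_map (fun x => PLam x M)); constructor; auto. Qed.

Lemma pbeta_star_lamr (A M M' : pterm S) :
  pbeta_star M M' -> pbeta_star (PLam A M) (PLam A M').
Proof. apply (pbeta_star_map (PLam A)); constructor; auto. Qed.

Lemma pbeta_star_pil (A A' B : pterm S) :
  pbeta_star A A' -> pbeta_star (PPi A B) (PPi A' B).
Proof. apply (pbeta_star_map (fun x => PPi x B)); constructor; auto. Qed.

Lemma pbeta_star_pir (A B B' : pterm S) :
  pbeta_star B B' -> pbeta_star (PPi A B) (PPi A B').
Proof. apply (pbeta_star_map (PPi A)); constructor; auto. Qed.

Lemma phi_Cpi_app_pbeta_star s1 s2 s3 (Pi A B : pterm S) :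
  phi (Cpi s1 s2 s3) = Some Pi ->
  pbeta_star (PApp (PApp Pi A) B) (PPi A (PApp (plift 1 0 B) (PVar 0))).
Proof.
  intros H; injection H as <-.
  eapply rt_trans; [apply pbeta_star_appl, rt_step, pbeta_redex |].
  simpl; rewrite plift_0; apply rt_step.
  replace (PPi A (PApp (plift 1 0 B) (PVar 0)))
    with (psubst 0 B (PPi (plift 1 0 A) (PApp (PVar 1) (PVar 0))))
    by (simpl; rewrite psubst_plift_1; reflexivity).
  apply pbeta_redex.
Qed.

End InverseTranslation.

Lemma red_betaR_phi_psi_pbeta_star (P : pts_spec) (M N : lpterm (sort P)) :
  red_betaR P M N ->
  (forall M' N', phi M = Some M' -> phi N = Some N' -> pbeta_star M' N') /\
  (forall A' B', psi M = Some A' -> psi N = Some B' -> pbeta_star A' B').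
Proof.
  induction 1 as [| | | M M' N Hred [IH IH'] | M N N' _ [IH IH'] | A A' M _ [IH IH']
                  | A M M' _ [IH IH'] | A A' B _ [IH IH'] | A B B' _ [IH IH']];
    split; intros X Y HX HY; simpl in HX, HY; try discriminate; invert_some.
  - erewrite phi_lsubst in HY by eassumption.
    invert_some; apply rt_step, pbeta_redex.
  - apply rt_refl.
  - match goal with H : phi (llift 1 0 B) = Some _ |- _ =>
      erewrite phi_llift in H by eassumption end.
    invert_some; now apply (phi_Cpi_app_pbeta_star _ s1 s2 s3).
  - apply pbeta_star_appl; eauto.
  - destruct M; try discriminate.
    inversion Hred.
  - apply pbeta_star_appr; eauto.
  - destruct M; try discriminate; eauto.
  - apply pbeta_star_laml; eauto.
  - apply pbeta_star_lamr; eauto.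
  - apply pbeta_star_pil; eauto.
  - apply pbeta_star_pir; eauto.
Qed.

Theorem lemma5p11 (P : pts_spec) (HP : functional_spec P) :
  (forall (M N : lpterm (sort P)) (M' N' : pterm (sort P)),
      wf_lp P M -> red_betaR P M N ->
      phi M = Some M' -> phi N = Some N' -> pbeta_star M' N') /\
  (forall (A B : lpterm (sort P)) (A' B' : pterm (sort P)),
      wf_lp P A -> red_betaR P A B ->
      psi A = Some A' -> psi B = Some B' -> pbeta_star A' B').
Proof.
  split; intros M N M' N' _ Hred.
  - exact (proj1 (red_betaR_phi_psi_pbeta_star _ _ _ Hred) M' N').
  - exact (proj2 (red_betaR_phi_psi_pbeta_star _ _ _ Hred) M' N').
Qed.
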